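(* Let $d\ge2$. For $k\in\mathbb{N}$ let $g_k$ be the density on $S^d$ given by $g_k(\theta_0)=\frac{1+\cos^k\theta_0}{V_k}$, where $V_k=\int_{S^d}(1+\cos^k\theta_0)\,dS^d$. For $k,l\in\mathbb{N}$, let $Y_k,Y_l$ be independent isotropic random variables on $S^d$ with densities $g_k$ and $g_l$ respectively. Then $$V(Y_k+Y_l)=\frac{2\big(V(Y_k)+V(Y_l)\big)-V(Y_k)V(Y_l)}{2}.$$
   Context: $S^d=\{x\in\mathbb{R}^{d+1}:\|x\|=1\}$, $P=(1,0,\dots,0)$, and $\theta_0\in[0,\pi]$ denotes the first polar angle of a point $x\in S^d$, so $x_0=\cos\theta_0=\langle x,P\rangle$. The variance of a random variable $X$ on $S^d$ is $V(X)=E[\|X-P\|^2]=E[2-2\cos\theta_0]$. An isotropic random variable is one whose density depends only on $\theta_0$, written $y\mapsto F(\langle y,P\rangle)$. The sum $X_1+X_2$ of independent isotropic random variables with densities $F_1(\langle y,P\rangle)$, $F_2(\langle y,P\rangle)$ is the random variable with density $f(x)=\int_{S^d}F_1(\langle x',P\rangle)F_2(\langle x,x'\rangle)\,dx'$ (first move from $P$ to $x'$ according to $X_1$, then from $x'$ isotropically around $x'$ according to $X_2$). *)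

From HB Require Import structures.
From mathcomp Require Import all_boot all_order all_algebra.
From mathcomp Require Import all_classical all_reals all_analysis.
Set Implicit Arguments. Unset Strict Implicit. Unset Printing Implicit Defensive.
Import Order.TTheory GRing.Theory Num.Theory.
Import numFieldNormedType.Exports.
Local Open Scope classical_set_scope.
Local Open Scope ring_scope.

Section Sphere.
Variable R : realType.

Definition x0 {n : nat} (x : 'rV[R]_n.+1) : R := x ord0 ord0.

Definition dotp {n : nat} (x y : 'rV[R]_n.+1) : R := \sum_(i < n.+1) x ord0 i * y ord0 i.

(* Integral over S^n of f : R^{n+1} -> R with respect to the standard
   (unnormalized) surface measure dS^n, defined by hyperspherical coordinates:
     S^0 = {+1,-1} with counting measure, and for n >= 1
     \int_{S^n} f = \int_0^pi sin^{n-1}(t) \int_{S^{n-1}} f(cos t, sin t * y) dy dt.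
   Here t is the first polar angle theta_0, so x_0 = cos theta_0. *)
Fixpoint sphere_int (n : nat) : ('rV[R]_n.+1 -> R) -> R :=
  match n return ('rV[R]_n.+1 -> R) -> R with
  | 0 => fun f => f (const_mx 1) + f (const_mx (-1))
  | m.+1 => fun f =>
      \int[@lebesgue_measure R]_(t in `[0, pi]) 
        (sin t ^+ m * sphere_int (fun y : 'rV[R]_m.+1 =>
                         f (row_mx (const_mx (cos t) : 'rV[R]_1) (sin t *: y))))
  end.

Definition Vk (d k : nat) : R := sphere_int (n := d) (fun x => 1 + x0 x ^+ k).

(* The profile F_k of the density g_k: g_k(y) = F_k(<y,P>) = (1 + <y,P>^k)/V_k. *)
Definition Fk (d k : nat) (t : R) : R := (1 + t ^+ k) / Vk d k.

(* Variance of an isotropic random variable on S^d with density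
   y |-> f y: V = E[2 - 2 cos theta_0] = \int_{S^d} (2 - 2 x_0) f(x) dx. *)
Definition sph_variance (d : nat) (f : 'rV[R]_d.+1 -> R) : R :=
  sphere_int (n := d) (fun x => (2 - 2 * x0 x) * f x).

(* Density of X_1 + X_2 for independent isotropic X_1, X_2 with densities
   F_1(<y,P>), F_2(<y,P>):  f(x) = \int_{S^d} F_1(<x',P>) F_2(<x,x'>) dx'. *)
Definition sum_density (d : nat) (F1 F2 : R -> R) (x : 'rV[R]_d.+1) : R :=
  sphere_int (n := d) (fun x' => F1 (x0 x') * F2 (dotp x x')).

End Sphere.

(* The variance of an isotropic law with profile F is V = 2 - 2 M, where
   M = \int x_0 F(x_0) is its mean first coordinate, so the claim amounts to
   M(Y_k + Y_l) = M(Y_k) M(Y_l).  For a polynomial profile G and a unit vector u,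
     \int G(<x,u>) dx = \int G(x_0) dx,   \int x_0 G(<x,u>) dx = <u,P> \int x_0 G(x_0) dx;
   exchanging the two integrals that define M(Y_k + Y_l) then gives
   M(Y_k + Y_l) = M(Y_l) \int x'_0 g_k(x'_0) dx' = M(Y_k) M(Y_l).
   Since [sphere_int] is a Lebesgue integral, linearity and the exchange of
   integrals are only established for polynomial integrands: slicing the sphere
   along x_0 = cos t reduces them, by induction on the dimension, to the Wallis
   integrals \int_0^pi sin^p cos^q.  The two formulas above follow from
   \int (<x,u>)^j dx = c_j |u|^j, which becomes a binomial identity between
   Wallis integrals. *)

From HB Require Import structures.
From mathcomp Require Import all_boot all_order all_algebra.
From mathcomp Require Import all_classical all_reals all_analysis.
From mathcomp Require Import ring lra zify.
Import Order.TTheory GRing.Theory Num.Theory.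
Import numFieldNormedType.Exports.
Set Implicit Arguments. Unset Strict Implicit. Unset Printing Implicit Defensive.
Local Open Scope ring_scope.

Section Wallis.
Variable R : realType.
Local Notation mu := (@lebesgue_measure R).

Definition wallis (p q : nat) : R :=
  \int[mu]_(t in `[0, pi]) (sin t ^+ p * cos t ^+ q).

Lemma Rintegral_0pi_derive (f F : R -> R) :
  continuous f -> (forall x : R, is_derive x (1 : R) F (f x)) ->
  \int[mu]_(x in `[0, pi]) f x = F pi - F 0.
Proof.
move=> cf dF.
have cF : continuous F.
  move=> x; apply: differentiable_continuous; apply/derivable1_diffP.
  by have [] := dF x.
rewrite /Rintegral (continuous_FTC2 (F := F)) ?pi_gt0 //=.
- exact: continuous_subspaceT.
- split.
  + by move=> x _; have [] := dF x.
  + exact: cvg_at_right_filter (cF 0).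
  + exact: cvg_at_left_filter (cF pi).
- by move=> x _; rewrite derive1E derive_val.
Qed.

Lemma continuous_integrable_0pi (f : R -> R) :
  continuous f -> mu.-integrable `[0, pi] (EFin \o f).
Proof.
move=> cf; apply: continuous_compact_integrable; first exact: segment_compact.
exact: continuous_subspaceT.
Qed.

Lemma continuous_sin_cos (a : R) (p q : nat) :
  continuous (fun t => a * (sin t ^+ p * cos t ^+ q)).
Proof.
move=> x.
apply: (@continuousM _ _ (fun _ => a) (fun t => sin t ^+ p * cos t ^+ q)).
  exact: cst_continuous.
apply: (@continuousM _ _ (fun t => sin t ^+ p) (fun t => cos t ^+ q)).
  apply: (continuous_comp (f := sin) (g := fun z => z ^+ p)).
    exact: continuous_sin.
  exact: exprn_continuous.
apply: (continuous_comp (f := cos) (g := fun z => z ^+ q)).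
  exact: continuous_cos.
exact: exprn_continuous.
Qed.

Section TrigSum.
Variables (I : Type) (k : I -> R) (p q : I -> nat).

Lemma continuous_sin_cos_sum (s : seq I) :
  continuous (fun t => \sum_(i <- s) k i * (sin t ^+ p i * cos t ^+ q i)).
Proof.
elim: s => [|i s IH] x.
  under eq_fun do rewrite big_nil.
  exact: cst_continuous.
under eq_fun do rewrite big_cons.
exact: (continuousD (@continuous_sin_cos (k i) (p i) (q i) x) (IH x)).
Qed.

Lemma Rintegral_sin_cos_sum (s : seq I) :
  \int[mu]_(t in `[0, pi]) (\sum_(i <- s) k i * (sin t ^+ p i * cos t ^+ q i))
  = \sum_(i <- s) k i * wallis (p i) (q i).
Proof.
elim: s => [|i s IH].
  under eq_Rintegral => t _ do rewrite big_nil.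
  by rewrite big_nil Rintegral_cst ?mul0r.
under eq_Rintegral => t _ do rewrite big_cons.
rewrite big_cons RintegralD // -?IH ?RintegralZl //.
- apply: continuous_integrable_0pi => x.
  by have := @continuous_sin_cos 1 (p i) (q i) x; under eq_fun do rewrite mul1r.
- exact/continuous_integrable_0pi/continuous_sin_cos.
- exact/continuous_integrable_0pi/continuous_sin_cos_sum.
Qed.
End TrigSum.

Lemma wallis_sum_derive (I : Type) (s : seq I) (k : I -> R) (p q : I -> nat) (F : R -> R) :
  (forall x : R, is_derive x (1 : R) F (\sum_(i <- s) k i * (sin x ^+ p i * cos x ^+ q i))) ->
  \sum_(i <- s) k i * wallis (p i) (q i) = F pi - F 0.
Proof.
move=> dF; rewrite -Rintegral_sin_cos_sum.
exact: (Rintegral_0pi_derive (@continuous_sin_cos_sum _ k p q s) dF).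
Qed.

Lemma wallis_ibp p q : p.+1%:R * wallis p q.+1 = q%:R * wallis p.+2 q.-1.
Proof.
apply/eqP; rewrite -subr_eq0 -mulNr; apply/eqP.
pose s := [:: (p.+1%:R : R, p, q.+1); (- q%:R, p.+2, q.-1)].
have := @wallis_sum_derive _ s (fun i => i.1.1) (fun i => i.1.2) (fun i => i.2)
  (fun t => sin t ^+ p.+1 * cos t ^+ q).
rewrite sinpi sin0 !expr0n /= !mul0r subrr !big_cons big_nil addr0; apply => x.
have := is_deriveM (is_deriveX p.+1 (is_derive_sin x)) (is_deriveX q (is_derive_cos x)).
rewrite (_ : sin ^+ p.+1 * cos ^+ q = fun t => sin t ^+ p.+1 * cos t ^+ q);
  last by apply/funext => t; rewrite !fctE.
move=> dF; apply: is_derive_eq.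
by rewrite !big_cons big_nil /= !fctE /GRing.scale /= !exprS; ring.
Qed.

Lemma wallis_pythagoras p q : wallis p q = wallis p.+2 q + wallis p q.+2.
Proof.
pose s := [:: ((1 : R), p.+2, q); (1, p, q.+2)].
have := Rintegral_sin_cos_sum (fun i => i.1.1) (fun i => i.1.2) (fun i => i.2) s.
rewrite !big_cons big_nil /= addr0 !mul1r => <-.
apply: eq_Rintegral => x _.
rewrite !big_cons big_nil /= addr0 !mul1r -(addn2 p) -(addn2 q) !exprD.
by rewrite sin2cos2; ring.
Qed.

Lemma wallis_cos1 p : wallis p 1 = 0.
Proof.
have /eqP := wallis_ibp p 0; rewrite mul0r mulf_eq0 pnatr_eq0 /=.
exact/eqP.
Qed.

Lemma wallis00 : wallis 0 0 = pi.
Proof.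
have := @wallis_sum_derive _ [:: tt] (fun _ => 1) (fun _ => 0%N) (fun _ => 0%N) id.
rewrite !big_seq1 mul1r subr0; apply=> x; apply: is_derive_eq.
by rewrite big_seq1 !expr0 !mulr1.
Qed.

Lemma wallis10 : wallis 1 0 = 2.
Proof.
have -> : wallis 1 0 = - cos pi - - cos (0 : R).
  have := @wallis_sum_derive _ [:: tt] (fun _ => 1) (fun _ => 1%N) (fun _ => 0%N)
    (fun t => - cos t).
  rewrite !big_seq1 mul1r; apply=> x; apply: is_derive_eq.
  by rewrite big_seq1 expr1 expr0 mulr1 mul1r opprK.
by rewrite cospi cos0 opprK; lra.
Qed.

Lemma wallis_cosSS p q : wallis p q.+2 = q.+1%:R / (p + q).+2%:R * wallis p q.
Proof.
have hpq : (p + q).+2%:R != 0 :> R by rewrite pnatr_eq0.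
have e : (p + q).+2%:R = p.+1%:R + q.+1%:R :> R by rewrite -natrD addnS addSn.
apply: (mulfI hpq); rewrite mulrA mulrCA divff // mulr1 mulrC [wallis p q]wallis_pythagoras.
by rewrite e !mulrDr [wallis p q.+2 * _]mulrC (wallis_ibp p q.+1); ring.
Qed.

Lemma wallis_sinSS p q : wallis p.+2 q = p.+1%:R / (p + q).+2%:R * wallis p q.
Proof.
have e : (p + q).+2%:R = p.+1%:R + q.+1%:R :> R by rewrite -natrD addnS addSn.
rewrite {1}(_ : wallis p.+2 q = wallis p q - wallis p q.+2); last first.
  by rewrite [wallis p q]wallis_pythagoras; ring.
rewrite wallis_cosSS e; field.
by apply: lt0r_neq0; have := ler0n R p; have := ler0n R q; lra.
Qed.

Lemma wallis_odd p q : odd q -> wallis p q = 0.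
Proof.
move=> oq; rewrite -(odd_double_half q) oq add1n.
by elim: q./2 => [|n IH]; rewrite ?wallis_cos1 // doubleS wallis_cosSS IH mulr0.
Qed.

Lemma wallis_gt0 p : 0 < wallis p 0.
Proof.
suff : 0 < wallis p 0 /\ 0 < wallis p.+1 0 by case.
elim: p => [|p [h0 h1]]; first by rewrite wallis00 wallis10 pi_gt0.
by split => //; rewrite wallis_sinSS mulr_gt0.
Qed.

End Wallis.
Arguments wallis {R}.

(* [rising2 1 n] is the double factorial (2n - 1)!!. *)
Definition rising2 (c n : nat) : nat := \prod_(i < n) (c + i.*2).

Lemma rising2S c n : rising2 c n.+1 = (rising2 c n * (c + n.*2))%N.
Proof. by rewrite /rising2 big_ord_recr. Qed.

Lemma rising2D c a b : rising2 c (a + b) = (rising2 c a * rising2 (c + a.*2) b)%N.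
Proof.
rewrite /rising2 big_split_ord /=; congr (_ * _)%N.
by apply: eq_bigr => i _; rewrite doubleD addnA.
Qed.

Lemma rising2_gt0 c n : (0 < rising2 c.+1 n)%N.
Proof. by rewrite /rising2 prodn_gt0. Qed.

(* A boolean [e] treats the even and the odd case at once. *)
Lemma fact_double n (e : bool) : (n.*2 + e)`! = (2 ^ n * n`! * rising2 1 (n + e))%N.
Proof.
elim: n => [|n IH]; first by case: e; rewrite /rising2 ?big_ord0 ?big_ord1.
rewrite doubleS !addSn !factS IH rising2S expnS.
by case: e {IH}; rewrite /= ?addn0 ?addn1 -!mul2n; ring.
Qed.

Lemma bin_double a b (e : bool) :
  ('C((a + b).*2 + e, a.*2 + e) * rising2 1 (a + e) * rising2 1 b
   = 'C(a + b, a) * rising2 1 (a + b + e))%N.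
Proof.
have K_gt0 : (0 < 2 ^ (a + b) * a`! * b`!)%N by rewrite !muln_gt0 expn_gt0 !fact_gt0.
apply/eqP; rewrite -(eqn_pmul2r K_gt0); apply/eqP.
transitivity ((a + b).*2 + e)`!.
  have le_ab : (a.*2 + e <= (a + b).*2 + e)%N by rewrite leq_add2r leq_double leq_addr.
  rewrite -(bin_fact le_ab) subnDr doubleD addKn fact_double.
  have -> : (b.*2)`! = (2 ^ b * b`! * rising2 1 b)%N.
    by have := fact_double b false; rewrite /= !addn0.
  rewrite expnD; ring.
rewrite fact_double -(bin_fact (leq_addr b a)) addKn expnD; ring.
Qed.

Section WallisClosedForm.
Variable R : realType.

Lemma rising2_neq0 c n : (rising2 c.+1 n)%:R != 0 :> R.
Proof. by rewrite pnatr_eq0 -lt0n rising2_gt0. Qed.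

Lemma wallis_cos_double p n :
  wallis p n.*2 = wallis p 0 * (rising2 1 n)%:R / (rising2 p.+2 n)%:R :> R.
Proof.
elim: n => [|n IH]; first by rewrite /rising2 !big_ord0 mulr1 divr1.
rewrite doubleS wallis_cosSS IH !rising2S !natrM -addSn -addSn.
field; rewrite rising2_neq0 // andbT.
by apply: lt0r_neq0; have := ler0n R p; have := ler0n R n.*2; lra.
Qed.

Lemma wallis_sin_double p n :
  wallis (p + n.*2) 0 = wallis p 0 * (rising2 p.+1 n)%:R / (rising2 p.+2 n)%:R :> R.
Proof.
elim: n => [|n IH]; first by rewrite /rising2 !big_ord0 addn0 mulr1 divr1.
rewrite doubleS !addnS wallis_sinSS addn0 IH !rising2S !natrM -!addSn.
field; rewrite rising2_neq0 // andbT.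
by apply: lt0r_neq0; have := ler0n R p; have := ler0n R n.*2; lra.
Qed.

Lemma wallis_bin_double m a b (e : bool) :
  'C((a + b).*2 + e, a.*2 + e)%:R * wallis (m + b.*2) (a + e).*2
    * ((rising2 1 b)%:R / (rising2 m.+1 b)%:R)
  = 'C(a + b, a)%:R * wallis m (a + b + e).*2 :> R.
Proof.
rewrite !wallis_cos_double wallis_sin_double.
have -> : rising2 m.+2 (a + b + e) = (rising2 m.+2 b * rising2 (m + b.*2).+2 (a + e))%N.
  by rewrite (_ : a + b + e = b + (a + e))%N ?rising2D ?addSn //; lia.
have := bin_double a b e; move/(congr1 (fun n => n%:R : R)); rewrite !natrM => bin.
transitivity (wallis (R := R) m 0
    * ('C((a + b).*2 + e, a.*2 + e)%:R * (rising2 1 (a + e))%:R * (rising2 1 b)%:R)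
    / ((rising2 m.+2 b)%:R * (rising2 (m + b.*2).+2 (a + e))%:R)).
  by field; rewrite !rising2_neq0.
by rewrite bin; field; rewrite !rising2_neq0.
Qed.
End WallisClosedForm.

Section Coordinates.
Variables (R : realType) (m : nat).

Definition rtail (x : 'rV[R]_m.+2) : 'rV[R]_m.+1 := rsubmx (x : 'rV[R]_(1 + m.+1)).

Lemma x0_row_mx (c : R) (v : 'rV[R]_m.+1) :
  x0 (row_mx (const_mx c : 'rV[R]_1) v : 'rV[R]_m.+2) = c.
Proof.
rewrite /x0 (_ : ord0 = lshift m.+1 (ord0 : 'I_1)); last exact/val_inj.
by rewrite (row_mxEl (const_mx c : 'rV[R]_1)) mxE.
Qed.

Lemma rtail_row_mx (c : R) (v : 'rV[R]_m.+1) :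
  rtail (row_mx (const_mx c : 'rV[R]_1) v : 'rV[R]_m.+2) = v.
Proof. exact: row_mxKr. Qed.

Lemma dotpC (x y : 'rV[R]_m.+1) : dotp x y = dotp y x.
Proof. by apply: eq_bigr => i _; rewrite mulrC. Qed.

Lemma dotpZl (k : R) (x y : 'rV[R]_m.+1) : dotp (k *: x) y = k * dotp x y.
Proof. by rewrite /dotp mulr_sumr; apply: eq_bigr => i _; rewrite mxE mulrA. Qed.

Lemma dotpZr (k : R) (x y : 'rV[R]_m.+1) : dotp x (k *: y) = k * dotp x y.
Proof. by rewrite dotpC dotpZl dotpC. Qed.

Lemma dotp_rtail (x y : 'rV[R]_m.+2) :
  dotp x y = x0 x * x0 y + dotp (rtail x) (rtail y).
Proof.
rewrite /dotp /x0 /rtail.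
rewrite (_ : \sum_(i < m.+2) _ = \sum_(i < 1 + m.+1) x ord0 i * y ord0 i) //.
rewrite big_split_ord /= big_ord1.
rewrite (_ : lshift m.+1 (ord0 : 'I_1) = ord0); last exact/val_inj.
by congr (_ + _); apply: eq_bigr => i _; rewrite !mxE.
Qed.

End Coordinates.

Inductive polyfun {R : realType} {n : nat} : ('rV[R]_n.+1 -> R) -> Prop :=
| polyfun_cst c : polyfun (fun _ => c)
| polyfun_coord i : polyfun (fun x => x ord0 i)
| polyfun_add f g : polyfun f -> polyfun g -> polyfun (fun x => f x + g x)
| polyfun_mul f g : polyfun f -> polyfun g -> polyfun (fun x => f x * g x).

Section PolynomialFunctions.
Variables (R : realType) (n : nat).
Implicit Types f g : 'rV[R]_n.+1 -> R.

Lemma polyfun_x0 : polyfun (fun x : 'rV[R]_n.+1 => x0 x).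
Proof. exact: polyfun_coord. Qed.

Lemma polyfun_scale (k : R) f : polyfun f -> polyfun (fun x => k * f x).
Proof. exact/polyfun_mul/polyfun_cst. Qed.

Lemma polyfun_opp f : polyfun f -> polyfun (fun x => - f x).
Proof. by move=> pf; under eq_fun do rewrite -mulN1r; exact: polyfun_scale. Qed.

Lemma polyfun_exp f j : polyfun f -> polyfun (fun x => f x ^+ j).
Proof.
move=> pf; elim: j => [|j IH]; first exact: polyfun_cst.
by under eq_fun do rewrite exprS; exact: polyfun_mul.
Qed.

Lemma polyfun_sum (I : Type) (r : seq I) (F : I -> 'rV[R]_n.+1 -> R) :
  (forall i, polyfun (F i)) -> polyfun (fun x => \sum_(i <- r) F i x).
Proof.
move=> pF; elim: r => [|i r IH].
  by under eq_fun do rewrite big_nil; exact: polyfun_cst.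
by under eq_fun do rewrite big_cons; exact: polyfun_add.
Qed.

Lemma polyfun_dotp (w : 'rV[R]_n.+1) : polyfun (fun x => dotp x w).
Proof.
apply: (@polyfun_sum _ _ (fun i x => x ord0 i * w ord0 i)) => i.
by apply: polyfun_mul; [exact: polyfun_coord | exact: polyfun_cst].
Qed.

Lemma polyfun_horner (p : {poly R}) f : polyfun f -> polyfun (fun x => p.[f x]).
Proof.
move=> pf; under eq_fun do rewrite horner_coef.
apply: (@polyfun_sum _ _ (fun (i : 'I_(size p)) x => p`_i * f x ^+ i)) => i.
exact/polyfun_scale/polyfun_exp.
Qed.

End PolynomialFunctions.

Section Slices.
Variables (R : realType) (m : nat).

Definition slice_decomposition (f : 'rV[R]_m.+2 -> R) (I : finType)
    (a b : I -> nat) (g : I -> 'rV[R]_m.+1 -> R) :=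
  (forall i, polyfun (g i)) /\
  forall (c s : R) y,
    f (row_mx (const_mx c : 'rV[R]_1) (s *: y)) = \sum_i c ^+ a i * s ^+ b i * g i y.

Lemma polyfun_slice_decomposition f :
  polyfun f -> exists I a b g, @slice_decomposition f I a b g.
Proof.
elim=> {f} [c | i | f1 f2 _ [I1 [a1 [b1 [g1 [pg1 H1]]]]] _ [I2 [a2 [b2 [g2 [pg2 H2]]]]]
                | f1 f2 _ [I1 [a1 [b1 [g1 [pg1 H1]]]]] _ [I2 [a2 [b2 [g2 [pg2 H2]]]]]].
- exists 'I_1, (fun _ => 0%N), (fun _ => 0%N), (fun _ _ => c).
  by split=> [_|c' s y]; [exact: polyfun_cst | rewrite big_ord1 !expr0 !mul1r].
- have [j ij|j ij] := splitP (i : 'I_(1 + m.+1)).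
  + have -> : i = lshift m.+1 j :> 'I_(1 + m.+1) by apply/val_inj.
    exists 'I_1, (fun _ => 1%N), (fun _ => 0%N), (fun _ _ => 1).
    split=> [_|c s y]; first exact: polyfun_cst.
    by rewrite (row_mxEl (const_mx c : 'rV[R]_1)) big_ord1 mxE expr1 expr0 !mulr1.
  + have -> : i = rshift 1 j :> 'I_(1 + m.+1) by apply/val_inj.
    exists 'I_1, (fun _ => 0%N), (fun _ => 1%N), (fun _ y => y ord0 j).
    split=> [_|c s y]; first exact: polyfun_coord.
    by rewrite (row_mxEr (const_mx c : 'rV[R]_1)) big_ord1 mxE expr1 expr0 mul1r.
- exists (I1 + I2)%type, (fun k => match k with inl i => a1 i | inr j => a2 j end),
    (fun k => match k with inl i => b1 i | inr j => b2 j end),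
    (fun k => match k with inl i => g1 i | inr j => g2 j end).
  split=> [[i|j]|c s y]; [exact: pg1 | exact: pg2 |].
  by rewrite H1 H2 big_sumType.
- exists (I1 * I2)%type, (fun k => a1 k.1 + a2 k.2)%N, (fun k => b1 k.1 + b2 k.2)%N,
    (fun k y => g1 k.1 y * g2 k.2 y).
  split=> [[i j]|c s y]; first exact: polyfun_mul.
  rewrite H1 H2 big_distrl /=; under eq_bigr do rewrite big_distrr /=.
  by rewrite pair_big; apply: eq_bigr => -[i j] _ /=; rewrite !exprD; ring.
Qed.
End Slices.
Arguments slice_decomposition {R m} f {I} a b g.

Section LinearityStep.
Variables (R : realType) (m : nat).
Hypothesis lin : forall (k : R) (f g : 'rV[R]_m.+1 -> R), polyfun f -> polyfun g ->
  sphere_int (fun x => k * f x + g x) = k * sphere_int f + sphere_int g.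

Lemma sphere_int_sum_step (I : Type) (r : seq I) (k : I -> R) (g : I -> 'rV[R]_m.+1 -> R) :
  (forall i, polyfun (g i)) ->
  sphere_int (fun x => \sum_(i <- r) k i * g i x) = \sum_(i <- r) k i * sphere_int (g i).
Proof.
move=> pg; elim: r => [|i r IH].
  under eq_fun do rewrite big_nil.
  have := lin 1 (polyfun_cst 0) (polyfun_cst 0).
  by under eq_fun do rewrite mulr0 addr0; rewrite big_nil; lra.
rewrite big_cons -IH -lin //; last by apply: polyfun_sum => j; exact: polyfun_scale.
by under eq_fun do rewrite big_cons.
Qed.

Lemma sphere_intZ_step (k : R) (f : 'rV[R]_m.+1 -> R) :
  polyfun f -> sphere_int (fun x => k * f x) = k * sphere_int f.
Proof.
move=> pf; have := @sphere_int_sum_step _ [:: tt] (fun _ => k) (fun _ => f) (fun _ => pf).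
by rewrite big_seq1; under eq_fun do rewrite big_seq1.
Qed.

Lemma sphere_int_slice_step (f : 'rV[R]_m.+2 -> R) (I : finType) a b g :
  slice_decomposition f a b g ->
  sphere_int f = \sum_(i : I) sphere_int (g i) * wallis (m + b i) (a i).
Proof.
move=> [pg Hf] /=.
rewrite -(Rintegral_sin_cos_sum (fun i => sphere_int (g i)) (fun i => m + b i)%N a).
apply: eq_Rintegral => t _; under eq_fun do rewrite Hf.
rewrite (sphere_int_sum_step _ (fun i => cos t ^+ a i * sin t ^+ b i)) // mulr_sumr.
by apply: eq_bigr => i _; rewrite exprD; ring.
Qed.

End LinearityStep.

Section Linearity.
Variable R : realType.

Lemma sphere_int_linear n (k : R) (f g : 'rV[R]_n.+1 -> R) : polyfun f -> polyfun g ->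
  sphere_int (fun x => k * f x + g x) = k * sphere_int f + sphere_int g.
Proof.
elim: n k f g => [|m IH] k f g pf pg; first by rewrite /=; ring.
have [I1 [a1 [b1 [g1 [pg1 H1]]]]] := polyfun_slice_decomposition pf.
have [I2 [a2 [b2 [g2 [pg2 H2]]]]] := polyfun_slice_decomposition pg.
have D : slice_decomposition (fun x => k * f x + g x)
    (fun i => match i with inl i => a1 i | inr j => a2 j end)
    (fun i => match i with inl i => b1 i | inr j => b2 j end)
    (fun i => match i with inl i => fun y => k * g1 i y | inr j => g2 j end).
  split=> [[i|j]|c s y]; [exact: polyfun_scale | exact: pg2 |].
  rewrite H1 H2 big_sumType mulr_sumr; congr (_ + _).
  by apply: eq_bigr => i _; ring.
rewrite (sphere_int_slice_step IH D) (sphere_int_slice_step IH (conj pg1 H1)).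
rewrite (sphere_int_slice_step IH (conj pg2 H2)) big_sumType mulr_sumr; congr (_ + _).
by apply: eq_bigr => i _ /=; rewrite sphere_intZ_step // mulrA.
Qed.

Lemma sphere_int_sum n (I : Type) (r : seq I) (k : I -> R) (g : I -> 'rV[R]_n.+1 -> R) :
  (forall i, polyfun (g i)) ->
  sphere_int (fun x => \sum_(i <- r) k i * g i x) = \sum_(i <- r) k i * sphere_int (g i).
Proof. exact/sphere_int_sum_step/sphere_int_linear. Qed.

Lemma sphere_intD n (f g : 'rV[R]_n.+1 -> R) : polyfun f -> polyfun g ->
  sphere_int (fun x => f x + g x) = sphere_int f + sphere_int g.
Proof.
move=> pf pg; have := sphere_int_linear 1 pf pg.
by under eq_fun do rewrite mul1r; rewrite mul1r.
Qed.

Lemma sphere_intZ n (k : R) (f : 'rV[R]_n.+1 -> R) :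
  polyfun f -> sphere_int (fun x => k * f x) = k * sphere_int f.
Proof. exact/sphere_intZ_step/sphere_int_linear. Qed.

Lemma sphere_int_comb n (a b : R) (f g : 'rV[R]_n.+1 -> R) : polyfun f -> polyfun g ->
  sphere_int (fun x => a * f x + b * g x) = a * sphere_int f + b * sphere_int g.
Proof. by move=> pf pg; rewrite sphere_int_linear ?sphere_intZ //; exact: polyfun_scale. Qed.

Lemma sphere_int_slice m (f : 'rV[R]_m.+2 -> R) (I : finType) a b g :
  slice_decomposition f a b g ->
  sphere_int f = \sum_(i : I) sphere_int (g i) * wallis (m + b i) (a i).
Proof. exact/sphere_int_slice_step/sphere_int_linear. Qed.

End Linearity.

Lemma eq_sphere_int (R : realType) n (f g : 'rV[R]_n.+1 -> R) :
  (forall x, dotp x x = 1 -> f x = g x) -> sphere_int f = sphere_int g.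
Proof.
elim: n f g => [|m IH] f g fg /=.
  by rewrite !fg // /dotp big_ord1 !mxE; ring.
apply: eq_Rintegral => t _; congr (_ * _); apply: IH => y yy; apply: fg.
by rewrite dotp_rtail x0_row_mx rtail_row_mx dotpZl dotpZr yy mulr1 -!expr2 addrC sin2cos2 subrK.
Qed.

Section Moments.
Variable R : realType.

Definition sphere_area n : R := sphere_int (n := n) (fun _ => 1).

Definition sphere_moment n j : R := sphere_int (n := n) (fun x => x0 x ^+ j).

Lemma sphere_moment0 n : sphere_moment n 0 = sphere_area n.
Proof. by congr sphere_int; apply/funext => x; rewrite expr0. Qed.

Lemma sphere_moment_succ m j : sphere_moment m.+1 j = sphere_area m * wallis m j.
Proof.
rewrite /sphere_moment (@sphere_int_slice _ _ _ 'I_1 (fun _ => j) (fun _ => 0%N) (fun _ _ => 1)).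
  by rewrite big_ord1 addn0 mulrC.
split=> [_|c s y]; first exact: polyfun_cst.
by rewrite x0_row_mx big_ord1 expr0 !mulr1.
Qed.

Lemma sphere_area_succ m : sphere_area m.+1 = sphere_area m * wallis m 0.
Proof. by rewrite -sphere_moment0 sphere_moment_succ. Qed.

Lemma sphere_area_gt0 n : 0 < sphere_area n.
Proof.
elim: n => [|n IH]; first by rewrite /sphere_area /=; lra.
by rewrite sphere_area_succ mulr_gt0 // wallis_gt0.
Qed.

Lemma x0_const (c : R) : x0 (const_mx c : 'rV[R]_1) = c.
Proof. by rewrite /x0 mxE. Qed.

Lemma sphere_moment_odd n j : odd j -> sphere_moment n j = 0.
Proof.
case: n => [|n] oj; last by rewrite sphere_moment_succ wallis_odd ?mulr0.
by rewrite /sphere_moment /= !x0_const expr1n -signr_odd oj addrN.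
Qed.

Lemma sphere_moment_double n j :
  sphere_moment n j.*2 = sphere_area n * (rising2 1 j)%:R / (rising2 n.+1 j)%:R.
Proof.
case: n => [|n]; last by rewrite sphere_moment_succ wallis_cos_double sphere_area_succ !mulrA.
rewrite mulfK ?rising2_neq0 // /sphere_moment /sphere_area /= !x0_const.
by rewrite -signr_odd odd_double expr1n.
Qed.

Lemma sphere_moment_ge0 n j : 0 <= sphere_moment n j.
Proof.
have [oj|ej] := boolP (odd j); first by rewrite sphere_moment_odd.
rewrite -(odd_double_half j) (negbTE ej) add0n sphere_moment_double.
by apply: divr_ge0; [apply: mulr_ge0; [exact/ltW/sphere_area_gt0 | exact: ler0n] | exact: ler0n].
Qed.

End Moments.
Arguments sphere_area {R} n.
Arguments sphere_moment {R} n j.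

Lemma sum_parity (V : nmodType) (F : nat -> V) (e : bool) s :
  (forall i, odd i != e -> F i = 0) ->
  \sum_(i < (s.*2 + e).+1) F i = \sum_(a < s.+1) F (a.*2 + e)%N.
Proof.
move=> F0; elim: s => [|s IH].
  rewrite big_ord1 double0 !add0n; case: e F0 => F0; last by rewrite big_ord1.
  by rewrite big_ord_recl F0 // big_ord1 add0r.
rewrite [RHS]big_ord_recr /= -IH doubleS !addSn big_ord_recr big_ord_recr /= IH F0 ?addr0 //.
by rewrite /= oddD odd_double; case: e {IH F0}.
Qed.

Lemma odd_addbF j (e : bool) : ~~ odd (j + e) -> odd j = e.
Proof. by rewrite oddD; case: (odd j); case: e. Qed.

Section FunkHecke.
Variable R : realType.

Lemma zonal_term m a b (e : bool) (u0 X : R) :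
  'C((a + b).*2 + e, a.*2 + e)%:R * u0 ^+ (a.*2 + e) * (sphere_moment m b.*2 * X ^+ b)
    * wallis (m + b.*2) (a + e).*2
  = u0 ^+ e * sphere_moment m.+1 (a + b + e).*2 * (X ^+ b * (u0 ^+ 2) ^+ a * 'C(a + b, a)%:R).
Proof.
rewrite sphere_moment_double sphere_moment_succ.
transitivity (sphere_area m * X ^+ b * u0 ^+ (a.*2 + e) *
  ('C((a + b).*2 + e, a.*2 + e)%:R * wallis (m + b.*2) (a + e).*2
   * ((rising2 1 b)%:R / (rising2 m.+1 b)%:R))); first by ring.
by rewrite wallis_bin_double exprD -mul2n exprM; ring.
Qed.

Lemma zonal_sum m (e : bool) j (u0 X : R) :
  \sum_(i < j.+1) 'C(j, i)%:R * u0 ^+ i * (sphere_moment m (j - i) * X ^+ (j - i)./2)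
                  * wallis (m + (j - i)) (i + e)
  = u0 ^+ e * sphere_moment m.+1 (j + e) * (u0 ^+ 2 + X) ^+ j./2.
Proof.
have [odd_je|even_je] := boolP (odd (j + e)%N).
  (* A term survives only if both [j - i] and [i + e] are even. *)
  rewrite sphere_moment_odd // mulr0 mul0r big1 // => i _.
  move: odd_je; rewrite -[j in (j + e)%N](subnK (leq_ord i)) -addnA oddD.
  have [oji|_] /= := boolP (odd (j - i)); first by rewrite sphere_moment_odd // mul0r mulr0 mul0r.
  by move=> oie; rewrite wallis_odd ?mulr0.
have [s ->] : exists s, j = (s.*2 + e)%N.
  by exists j./2; rewrite -(odd_addbF even_je) addnC odd_double_half.
rewrite (@sum_parity _ (fun i => 'C(s.*2 + e, i)%:R * u0 ^+ i
    * (sphere_moment m (s.*2 + e - i) * X ^+ (s.*2 + e - i)./2)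
    * wallis (m + (s.*2 + e - i)) (i + e))) => [|i oie]; last first.
  by rewrite wallis_odd ?mulr0 // oddD; case: (odd i) oie; case: e {even_je}.
have -> : (s.*2 + e)./2 = s by rewrite addnC half_bit_double.
rewrite addrC exprDn mulr_sumr; apply: eq_bigr => -[a /= lt_as] _.
have [b ->] : exists b, s = (a + b)%N by exists (s - a)%N; rewrite subnKC // -ltnS.
have e1 : ((a + b).*2 + e - (a.*2 + e) = b.*2)%N by rewrite subnDr doubleD addKn.
have e2 : (a.*2 + e + e = (a + e).*2)%N by rewrite -!addnn; lia.
have e3 : ((a + b).*2 + e + e = (a + b + e).*2)%N by rewrite -!addnn; lia.
by rewrite e1 e2 e3 doubleK addKn -[_ *+ 'C(a + b, a)]mulr_natr zonal_term.
Qed.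

Lemma sphere_int_x0_dotp_dim0 (e : bool) (u : 'rV[R]_1) j :
  sphere_int (fun x => x0 x ^+ e * dotp x u ^+ j)
  = x0 u ^+ e * sphere_moment 0 (j + e) * dotp u u ^+ j./2.
Proof.
rewrite /sphere_moment /= /dotp !big_ord1 !mxE /x0 !mxE; set v := u ord0 ord0.
rewrite !expr1n !mul1r mulN1r [(- v) ^+ j]exprNn mulrA -exprD (addnC e) -signr_odd.
have [_|even_je] := boolP (odd (j + e)%N); first by rewrite /= expr1 mulN1r addrN subrr mulr0 mul0r.
rewrite expr0 -{1 2}(odd_double_half j) (odd_addbF even_je) exprD -mul2n exprM expr2; ring.
Qed.

Lemma sphere_int_x0_dotp_succ m :
  (forall (u : 'rV[R]_m.+1) j,
     sphere_int (fun y => dotp y u ^+ j) = sphere_moment m j * dotp u u ^+ j./2) ->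
  forall (e : bool) (u : 'rV[R]_m.+2) j,
  sphere_int (fun x => x0 x ^+ e * dotp x u ^+ j)
  = x0 u ^+ e * sphere_moment m.+1 (j + e) * dotp u u ^+ j./2.
Proof.
move=> IH e u j.
have D : slice_decomposition (fun x => x0 x ^+ e * dotp x u ^+ j)
    (fun i : 'I_j.+1 => (i + e)%N) (fun i => (j - i)%N)
    (fun i y => 'C(j, i)%:R * x0 u ^+ i * dotp y (rtail u) ^+ (j - i)).
  split=> [i|c s y]; first exact/polyfun_scale/polyfun_exp/polyfun_dotp.
  rewrite x0_row_mx dotp_rtail x0_row_mx rtail_row_mx dotpZl addrC exprDn mulr_sumr.
  by apply: eq_bigr => i _; rewrite -mulr_natr !exprMn exprD; ring.
rewrite (sphere_int_slice D) [dotp u u]dotp_rtail -zonal_sum; apply: eq_bigr => i _.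
by rewrite sphere_intZ ?IH //; exact/polyfun_exp/polyfun_dotp.
Qed.

Lemma sphere_int_dotp_exp n (u : 'rV[R]_n.+1) j :
  sphere_int (fun x => dotp x u ^+ j) = sphere_moment n j * dotp u u ^+ j./2.
Proof.
suff e0 k (v : 'rV[R]_k.+1) i : sphere_int (fun x => x0 x ^+ false * dotp x v ^+ i)
    = sphere_int (fun x => dotp x v ^+ i).
  elim: n u j => [|m IH] u j; rewrite -e0.
    by rewrite sphere_int_x0_dotp_dim0 /= addn0 expr0 mul1r.
  by rewrite sphere_int_x0_dotp_succ // /= addn0 expr0 mul1r.
by under eq_fun do rewrite expr0 mul1r.
Qed.

Lemma sphere_int_x0_dotp n (e : bool) (u : 'rV[R]_n.+1) j :
  sphere_int (fun x => x0 x ^+ e * dotp x u ^+ j)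
  = x0 u ^+ e * sphere_moment n (j + e) * dotp u u ^+ j./2.
Proof.
case: n u => [|m] u; first exact: sphere_int_x0_dotp_dim0.
exact/sphere_int_x0_dotp_succ/sphere_int_dotp_exp.
Qed.

End FunkHecke.

Section Isotropy.
Variables (R : realType) (n : nat).
Implicit Types (p : {poly R}) (u : 'rV[R]_n.+1).

Lemma sphere_int_x0_horner (e : bool) p (g : 'rV[R]_n.+1 -> R) : polyfun g ->
  sphere_int (fun x => x0 x ^+ e * p.[g x])
  = \sum_(i < size p) p`_i * sphere_int (fun x => x0 x ^+ e * g x ^+ i).
Proof.
move=> pg; rewrite -sphere_int_sum => [|i]; last first.
  by apply: polyfun_mul; apply: polyfun_exp => //; exact: polyfun_x0.
apply: eq_sphere_int => x _; rewrite horner_coef mulr_sumr.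
by apply: eq_bigr => i _; rewrite mulrCA.
Qed.

Lemma sphere_int_x0_horner_dotp (e : bool) p u : dotp u u = 1 ->
  sphere_int (fun x => x0 x ^+ e * p.[dotp x u])
  = x0 u ^+ e * sphere_int (fun x : 'rV[R]_n.+1 => x0 x ^+ e * p.[x0 x]).
Proof.
move=> uu; rewrite !sphere_int_x0_horner ?mulr_sumr; [|exact: polyfun_x0|exact: polyfun_dotp].
apply: eq_bigr => i _; rewrite sphere_int_x0_dotp uu expr1n mulr1 mulrCA.
by congr (_ * _); under eq_fun do rewrite -exprD addnC.
Qed.

Lemma sphere_int_horner_dotp p u : dotp u u = 1 ->
  sphere_int (fun x => p.[dotp x u]) = sphere_int (fun x : 'rV[R]_n.+1 => p.[x0 x]).
Proof.
move=> uu; transitivity (sphere_int (fun x => x0 x ^+ false * p.[dotp x u])).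
  by apply: eq_sphere_int => x _; rewrite /= expr0 mul1r.
rewrite sphere_int_x0_horner_dotp //= expr0 mul1r.
by apply: eq_sphere_int => x _; rewrite expr0 mul1r.
Qed.

Lemma sphere_int_x0_horner_dotp1 p u : dotp u u = 1 ->
  sphere_int (fun x => x0 x * p.[dotp x u])
  = x0 u * sphere_int (fun x : 'rV[R]_n.+1 => x0 x * p.[x0 x]).
Proof. exact: (sphere_int_x0_horner_dotp true). Qed.

End Isotropy.

Section Separable.
Variables (R : realType) (n : nat).
Implicit Types P Q : 'rV[R]_n.+1 -> 'rV[R]_n.+1 -> R.

Definition separable P := exists (I : finType) (f g : I -> 'rV[R]_n.+1 -> R),
  (forall i, polyfun (f i) /\ polyfun (g i)) /\ forall x y, P x y = \sum_i f i x * g i y.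

Lemma separable_l (f : 'rV[R]_n.+1 -> R) : polyfun f -> separable (fun x _ => f x).
Proof.
move=> pf; exists 'I_1, (fun _ => f), (fun _ _ => 1).
by split=> [_|x y]; [split=> //; exact: polyfun_cst | rewrite big_ord1 mulr1].
Qed.

Lemma separable_r (g : 'rV[R]_n.+1 -> R) : polyfun g -> separable (fun _ y => g y).
Proof.
move=> pg; exists 'I_1, (fun _ _ => 1), (fun _ => g).
by split=> [_|x y]; [split=> //; exact: polyfun_cst | rewrite big_ord1 mul1r].
Qed.

Lemma separable_add P Q : separable P -> separable Q -> separable (fun x y => P x y + Q x y).
Proof.
move=> [I1 [f1 [g1 [pfg1 H1]]]] [I2 [f2 [g2 [pfg2 H2]]]].
exists (I1 + I2)%type, (fun k => match k with inl i => f1 i | inr j => f2 j end),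
  (fun k => match k with inl i => g1 i | inr j => g2 j end).
by split=> [[i|j] //|x y]; rewrite H1 H2 big_sumType.
Qed.

Lemma separable_mul P Q : separable P -> separable Q -> separable (fun x y => P x y * Q x y).
Proof.
move=> [I1 [f1 [g1 [pfg1 H1]]]] [I2 [f2 [g2 [pfg2 H2]]]].
exists (I1 * I2)%type, (fun k x => f1 k.1 x * f2 k.2 x), (fun k y => g1 k.1 y * g2 k.2 y).
split=> [[i j]|x y].
  by have [? ?] := pfg1 i; have [? ?] := pfg2 j; split; exact: polyfun_mul.
rewrite H1 H2 big_distrl /=; under eq_bigr do rewrite big_distrr /=.
by rewrite pair_big; apply: eq_bigr => -[i j] _ /=; ring.
Qed.

Lemma separable_dotp : separable (fun x y => dotp x y).
Proof.
exists 'I_n.+1, (fun i x => x ord0 i), (fun i y => y ord0 i).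
by split=> // i; split; exact: polyfun_coord.
Qed.

Lemma separable_horner (p : {poly R}) P : separable P -> separable (fun x y => p.[P x y]).
Proof.
move=> sP; under eq_fun do under eq_fun do rewrite horner_coef.
elim: (index_enum _) => [|i r IH].
  by under eq_fun do under eq_fun do rewrite big_nil; exact/separable_l/polyfun_cst.
under eq_fun do under eq_fun do rewrite big_cons.
apply: separable_add IH; apply: separable_mul; first exact/separable_l/polyfun_cst.
elim: (nat_of_ord i) => [|j IHj].
  by under eq_fun do under eq_fun do rewrite expr0; exact/separable_l/polyfun_cst.
by under eq_fun do under eq_fun do rewrite exprS; exact: separable_mul.
Qed.

Lemma sphere_int_swap P : separable P ->
  sphere_int (fun x => sphere_int (fun y => P x y))
  = sphere_int (fun y => sphere_int (fun x => P x y)).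
Proof.
move=> [I [f [g [pfg H]]]].
have pf i : polyfun (f i) by have [] := pfg i.
have pg i : polyfun (g i) by have [] := pfg i.
have -> : P = fun x y => \sum_i f i x * g i y by apply/funext => x; apply/funext => y.
transitivity (sphere_int (fun x => \sum_i sphere_int (g i) * f i x)).
  apply: eq_sphere_int => x _; rewrite sphere_int_sum //.
  by apply: eq_bigr => i _; rewrite mulrC.
transitivity (sphere_int (fun y => \sum_i sphere_int (f i) * g i y)); last first.
  apply: eq_sphere_int => y _.
  transitivity (sphere_int (fun x => \sum_i g i y * f i x)); last first.
    by apply: eq_sphere_int => x _; apply: eq_bigr => i _; rewrite mulrC.
  by rewrite sphere_int_sum //; apply: eq_bigr => i _; rewrite mulrC.
by rewrite !sphere_int_sum //; apply: eq_bigr => i _; rewrite mulrC.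
Qed.

End Separable.

Section Variance.
Variables (R : realType) (n : nat).
Implicit Types p q : {poly R}.

Lemma sph_variance_horner p :
  sph_variance (fun x : 'rV[R]_n.+1 => p.[x0 x])
  = 2 * sphere_int (fun x : 'rV[R]_n.+1 => p.[x0 x])
    - 2 * sphere_int (fun x : 'rV[R]_n.+1 => x0 x * p.[x0 x]).
Proof.
transitivity (sphere_int (fun x : 'rV[R]_n.+1 => 2 * p.[x0 x] + (-2) * (x0 x * p.[x0 x]))).
  by apply: eq_sphere_int => x _; ring.
rewrite sphere_int_comb; first by ring.
  exact/polyfun_horner/polyfun_x0.
by apply: polyfun_mul; [exact: polyfun_x0 | exact/polyfun_horner/polyfun_x0].
Qed.

Lemma sph_variance_sum_density p q :
  sphere_int (fun x : 'rV[R]_n.+1 => p.[x0 x]) = 1 ->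
  sphere_int (fun x : 'rV[R]_n.+1 => q.[x0 x]) = 1 ->
  sph_variance (sum_density (d := n) (horner p) (horner q))
  = (2 * (sph_variance (fun x : 'rV[R]_n.+1 => p.[x0 x])
          + sph_variance (fun x : 'rV[R]_n.+1 => q.[x0 x]))
     - sph_variance (fun x : 'rV[R]_n.+1 => p.[x0 x])
       * sph_variance (fun x : 'rV[R]_n.+1 => q.[x0 x])) / 2.
Proof.
move=> Zp Zq; rewrite !sph_variance_horner Zp Zq.
set Mp := sphere_int _; set Mq := sphere_int _.
have pdotp (x : 'rV[R]_n.+1) : polyfun (fun y => q.[dotp x y]).
  by under eq_fun do rewrite dotpC; exact/polyfun_horner/polyfun_dotp.
have px0 : polyfun (fun y : 'rV[R]_n.+1 => p.[x0 y]) by exact/polyfun_horner/polyfun_x0.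
suff -> : sph_variance (sum_density (d := n) (horner p) (horner q)) = 2 - 2 * Mp * Mq by field.
rewrite /sph_variance /sum_density.
transitivity (sphere_int (fun x : 'rV[R]_n.+1 => sphere_int (fun y =>
    (2 - 2 * x0 x) * (p.[x0 y] * q.[dotp x y])))).
  by apply: eq_sphere_int => x _; rewrite sphere_intZ //; exact: polyfun_mul.
rewrite sphere_int_swap; last first.
  apply: separable_mul; first by apply/separable_l/polyfun_add;
    [exact: polyfun_cst | exact/polyfun_opp/polyfun_scale/polyfun_x0].
  apply: separable_mul; first exact: separable_r.
  exact/separable_horner/separable_dotp.
transitivity (sphere_int (fun y : 'rV[R]_n.+1 => 2 * p.[x0 y] + (- 2 * Mq) * (x0 y * p.[x0 y]))).
  apply: eq_sphere_int => y yy.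
  have pq : polyfun (fun x : 'rV[R]_n.+1 => q.[dotp x y]) by exact/polyfun_horner/polyfun_dotp.
  transitivity (sphere_int (fun x => 2 * p.[x0 y] * q.[dotp x y]
                                     + (- 2 * p.[x0 y]) * (x0 x * q.[dotp x y]))).
    by apply: eq_sphere_int => x _; ring.
  rewrite sphere_int_comb ?sphere_int_horner_dotp ?sphere_int_x0_horner_dotp1 // ?Zq -/Mq;
    [ring | exact/polyfun_mul/pq/polyfun_x0].
rewrite sphere_int_comb ?Zp -/Mp; [ring | exact: px0 | exact/polyfun_mul/px0/polyfun_x0].
Qed.

End Variance.

Section Density.
Variables (R : realType) (d k : nat).

Definition Fk_poly : {poly R} := (Vk R d k)^-1 *: (1 + 'X^k).

Lemma Fk_horner : Fk d k = horner Fk_poly.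
Proof. by apply/funext => t; rewrite /Fk /Fk_poly hornerZ hornerD hornerC hornerXn mulrC. Qed.

Lemma Vk_gt0 : 0 < Vk R d k.
Proof.
rewrite /Vk sphere_intD -/(sphere_area d) -/(sphere_moment d k).
- by rewrite ltr_pwDl ?sphere_area_gt0 ?sphere_moment_ge0.
- exact: polyfun_cst.
- exact/polyfun_exp/polyfun_x0.
Qed.

Lemma sphere_int_Fk_poly : sphere_int (fun x : 'rV[R]_d.+1 => Fk_poly.[x0 x]) = 1.
Proof.
transitivity (sphere_int (fun x : 'rV[R]_d.+1 => (Vk R d k)^-1 * (1 + x0 x ^+ k))).
  by apply: eq_sphere_int => x _; rewrite hornerZ hornerD hornerC hornerXn.
rewrite sphere_intZ ?mulVf ?gt_eqF ?Vk_gt0 //.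
by apply: polyfun_add; [exact: polyfun_cst | exact/polyfun_exp/polyfun_x0].
Qed.

End Density.

Theorem lemma3p3 (R : realType) (d : nat) (hd : (2 <= d)%N) (k l : nat) :
  sph_variance (d := d) (sum_density (d := d) (@Fk R d k) (@Fk R d l))
  = (2 * (sph_variance (d := d) (fun x => @Fk R d k (x0 x)) + sph_variance (d := d) (fun x => @Fk R d l (x0 x)))
     - sph_variance (d := d) (fun x => @Fk R d k (x0 x)) * sph_variance (d := d) (fun x => @Fk R d l (x0 x))) / 2.
Proof.
(* The identity holds on every sphere. *)
by rewrite !Fk_horner; apply: sph_variance_sum_density; exact: sphere_int_Fk_poly.
Qed.
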